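(* Let $L$ be a language and suppose that a language $A$ over an alphabet $\Sigma$ is definable by a sentence $\varphi\in Q^{\star}_L\mathrm{FO}$ of the form $Q^\star_L R_1,\dots,R_t[\psi_1,\dots,\psi_{s-1}]$ in which all quantified relation variables $R_i$ have arity $k$. Let $\sharp\notin\Sigma$. Then the language $A^*=\{w\,\sharp^{|w|^k-|w|} : w\in A\}$ over $\Sigma\cup\{\sharp\}$ is definable in $\mathrm{FO}(Q^{\star}_L,+,\times)$.
   Context: Strings as structures: a nonempty string $b_0\cdots b_{n-1}$ over the ordered alphabet $(a_1,\dots,a_s)$ is the structure with universe $\{0,\dots,n-1\}$, natural order $<$, and unary predicates $P_{a_i}=\{j:b_j=a_i\}$. FO uses $=$, $<$, these predicates, $\min,\max$, connectives, $\exists,\forall$; ''$+,\times$'' means the ternary relations $i+j=k$ and $i\cdot j=k$ are additionally built in. Quantifier $Q^\star_L$ of arity $m\ge1$: for $L$ over $(a_1,\dots,a_s)$ and distinct $m$-ary relation variables $\overline X=(X_1,\dots,X_t)$, over universe $\{0,\dots,n-1\}$ encode $A_i\subseteq\{0,\dots,n-1\}^m$ by the bit string $s^i_0\cdots s^i_{n^m-1}$ with $s^i_j=1$ iff the $j$-th tuple in lexicographic order belongs to $A_i$; order all assignments lexicographically by the concatenated code $s^1_0\cdots s^1_{n^m-1}\cdots s^t_0\cdots s^t_{n^m-1}$. Then $\mathcal A\models Q^\star_L\overline X[\varphi_1,\dots,\varphi_{s-1}]$ iff the word whose $i$-th letter is $a_j$ for the least $j$ with $\varphi_j$ true at the $i$-th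 assignment (and $a_s$ if none) lies in $L$. $Q^\star_L\mathrm{FO}$ consists of formulas $Q^\star_L\overline X[\varphi_1,\dots,\varphi_{s-1}]$, $\overline X$ relation variables of some arity, $\varphi_i$ first-order (only $<$ built in). $\mathrm{FO}(Q^\star_L,+,\times)$ denotes first-order logic with built-in $<,+,\times$, extended by unary second-order variables and closed under application of the monadic ($m=1$) quantifier $Q^\star_L$. *)

From mathcomp Require Import all_boot.
Set Implicit Arguments. Unset Strict Implicit. Unset Printing Implicit Defensive.

Inductive term : Type := TVar of nat | TMin | TMax.

Definition eval_term (n : nat) (env : nat -> nat) (u : term) : nat :=
  match u with TVar x => env x | TMin => 0 | TMax => n.-1 end.

Definition tvars (u : term) : seq nat := if u is TVar x then [:: x] else [::].

Definition upd (env : nat -> nat) (x a : nat) : nat -> nat :=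
  fun y => if y == x then a else env y.

Definition letter_at {S : eqType} (w : seq S) (p : nat) (a : S) : bool :=
  nth None (map Some w) p == Some a.

Fixpoint bitstrings (N : nat) : seq (seq bool) :=
  if N is N'.+1 then [seq false :: b | b <- bitstrings N'] ++ [seq true :: b | b <- bitstrings N']
  else [:: [::]].

Fixpoint tuples_lex (n k : nat) : seq (seq nat) :=
  if k is k'.+1 then flatten [seq [seq i :: u | u <- tuples_lex n k'] | i <- iota 0 n]
  else [:: [::]].

(* The alphabet of L is
   'I_s.+1 = (a_1,...,a_{s+1}) in its natural order. *)
Definition pick_letter (s : nat) (bs : 'I_s -> bool) : 'I_s.+1 :=
  head ord_max [seq widen_ord (leqnSn s) j | j <- filter bs (enum 'I_s)].

Inductive fo1 (S : Type) (t k : nat) : Type :=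
| F1Eq of term & term
| F1Lt of term & term
| F1P of S & term
| F1Rel of 'I_t & k.-tuple term
| F1Not of fo1 S t k
| F1And of fo1 S t k & fo1 S t k
| F1Or of fo1 S t k & fo1 S t k
| F1Ex of nat & fo1 S t k
| F1All of nat & fo1 S t k.

Fixpoint fv1 {S : Type} {t k : nat} (f : fo1 S t k) : seq nat :=
  match f with
  | F1Eq u v | F1Lt u v => tvars u ++ tvars v
  | F1P _ u => tvars u
  | F1Rel _ us => flatten [seq tvars u | u <- us]
  | F1Not g => fv1 g
  | F1And g h | F1Or g h => fv1 g ++ fv1 h
  | F1Ex x g | F1All x g => filter (fun y => y != x) (fv1 g)
  end.

Fixpoint sat1 {S : eqType} {t k : nat} (w : seq S) (rel : 'I_t -> seq nat -> bool)
  (env : nat -> nat) (f : fo1 S t k) : bool :=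
  let n := size w in
  match f with
  | F1Eq u v => eval_term n env u == eval_term n env v
  | F1Lt u v => eval_term n env u < eval_term n env v
  | F1P a u => letter_at w (eval_term n env u) a
  | F1Rel i us => rel i [seq eval_term n env u | u <- us]
  | F1Not g => ~~ sat1 w rel env g
  | F1And g h => sat1 w rel env g && sat1 w rel env h
  | F1Or g h => sat1 w rel env g || sat1 w rel env h
  | F1Ex x g => has (fun a => sat1 w rel (upd env x a) g) (iota 0 n)
  | F1All x g => all (fun a => sat1 w rel (upd env x a) g) (iota 0 n)
  end.

(* decoding of a concatenated code b (length t * n^k) into t k-ary relations:
   tuple u is in A_i iff bit number (j) of the i-th block is 1, where u is the
   j-th tuple in lexicographic order *)
Definition rel_of (t n k : nat) (b : seq bool) : 'I_t -> seq nat -> bool :=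
  fun i u => (u \in tuples_lex n k) && nth false b (i * n ^ k + index u (tuples_lex n k)).

(* w |= Q*_L R_1..R_t [psi_1,...,psi_s]   (sentence: the psi_j are closed) *)
Definition qsat1 {S : eqType} (s t k : nat) (L : pred (seq 'I_s.+1))
  (psi : 'I_s -> fo1 S t k) (w : seq S) : bool :=
  let n := size w in
  L [seq pick_letter (fun j => sat1 w (@rel_of t n k b) (fun _ => 0) (psi j))
    | b <- bitstrings (t * n ^ k)].

Inductive fo2 (G : Type) (s : nat) : Type :=
| F2Eq of term & term
| F2Lt of term & term
| F2Plus of term & term & term
| F2Times of term & term & term
| F2P of G & term
| F2In of nat & term
| F2Not of fo2 G s
| F2And of fo2 G s & fo2 G s
| F2Or of fo2 G s & fo2 G s
| F2Ex of nat & fo2 G s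
| F2All of nat & fo2 G s
| F2Q of seq nat & ('I_s -> fo2 G s). (* Q*_L X_1..X_t [phi_1..phi_s], monadic *)

Fixpoint fv2 {G : Type} {s : nat} (f : fo2 G s) : seq nat :=
  match f with
  | F2Eq u v | F2Lt u v => tvars u ++ tvars v
  | F2Plus u v r | F2Times u v r => tvars u ++ tvars v ++ tvars r
  | F2P _ u | F2In _ u => tvars u
  | F2Not g => fv2 g
  | F2And g h | F2Or g h => fv2 g ++ fv2 h
  | F2Ex x g | F2All x g => filter (fun y => y != x) (fv2 g)
  | F2Q _ phis => flatten [seq fv2 (phis j) | j <- enum 'I_s]
  end.

Fixpoint fsv2 {G : Type} {s : nat} (f : fo2 G s) : seq nat :=
  match f with
  | F2Eq _ _ | F2Lt _ _ | F2Plus _ _ _ | F2Times _ _ _ | F2P _ _ => [::]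
  | F2In X _ => [:: X]
  | F2Not g | F2Ex _ g | F2All _ g => fsv2 g
  | F2And g h | F2Or g h => fsv2 g ++ fsv2 h
  | F2Q Xs phis => filter (fun Y => Y \notin Xs) (flatten [seq fsv2 (phis j) | j <- enum 'I_s])
  end.

Fixpoint wf2 {G : Type} {s : nat} (f : fo2 G s) : bool :=
  match f with
  | F2Eq _ _ | F2Lt _ _ | F2Plus _ _ _ | F2Times _ _ _ | F2P _ _ | F2In _ _ => true
  | F2Not g | F2Ex _ g | F2All _ g => wf2 g
  | F2And g h | F2Or g h => wf2 g && wf2 h
  | F2Q Xs phis => (0 < size Xs) && uniq Xs && all (fun j => wf2 (phis j)) (enum 'I_s)
  end.

Definition supd (senv : nat -> nat -> bool) (Xs : seq nat) (n : nat) (b : seq bool)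
  : nat -> nat -> bool :=
  fun Y e => if Y \in Xs then nth false b (index Y Xs * n + e) else senv Y e.

Fixpoint sat2 {G : eqType} {s : nat} (L : pred (seq 'I_s.+1)) (w : seq G)
  (senv : nat -> nat -> bool) (env : nat -> nat) (f : fo2 G s) : bool :=
  let n := size w in
  match f with
  | F2Eq u v => eval_term n env u == eval_term n env v
  | F2Lt u v => eval_term n env u < eval_term n env v
  | F2Plus u v r => eval_term n env u + eval_term n env v == eval_term n env r
  | F2Times u v r => eval_term n env u * eval_term n env v == eval_term n env r
  | F2P a u => letter_at w (eval_term n env u) a
  | F2In X u => senv X (eval_term n env u)
  | F2Not g => ~~ sat2 L w senv env g
  | F2And g h => sat2 L w senv env g && sat2 L w senv env h
  | F2Or g h => sat2 L w senv env g || sat2 L w senv env h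
  | F2Ex x g => has (fun a => sat2 L w senv (upd env x a) g) (iota 0 n)
  | F2All x g => all (fun a => sat2 L w senv (upd env x a) g) (iota 0 n)
  | F2Q Xs phis =>
      L [seq pick_letter (fun j => sat2 L w (supd senv Xs n b) env (phis j))
        | b <- bitstrings (size Xs * n)]
  end.

(** * The padded language A^* = { w #^(|w|^k - |w|) : w in A },  # = None *)
Definition A_star {S : Type} (A : pred (seq S)) (k : nat) (v : seq (option S)) : Prop :=
  exists w, A w /\ v = map Some w ++ nseq (size w ^ k - size w) None.

(* Since the padded word v = w #^(m^k - m) has length m^k, a k-tuple over the positions
   0..m-1 of w can be coded by one position of v: its rank in lexicographic order, which is
   its base-m value and is definable with + and * by Horner's scheme.  A k-ary relation on w
   thus becomes a set of positions of v, and the monadic quantifier over t such sets ranges,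
   in the same order, over exactly the bit strings of length t * m^k that the k-ary
   quantifier ranges over on w.  The sentence guesses x0 = m - 1, checks that exactly the
   positions after x0 carry #, that (x0 + 1)^k = |v|, and evaluates the translated
   Q*-formula with its first-order quantifiers relativized to positions <= x0. *)

From mathcomp Require Import all_boot zify.
Set Implicit Arguments. Unset Strict Implicit. Unset Printing Implicit Defensive.

Arguments F2Eq {G s}. Arguments F2Lt {G s}. Arguments F2Plus {G s}.
Arguments F2Times {G s}. Arguments F2P {G s}. Arguments F2In {G s}.

Lemma has_eq_andl (T : eqType) (P : pred T) c s :
  has (fun p => (c == p) && P p) s = (c \in s) && P c.
Proof.
apply/hasP/andP => [[p ps /andP[/eqP -> Pp]] // | [cs Pc]].
by exists c => //; rewrite eqxx.
Qed.

Lemma has_iota_prefix (P : pred nat) m N : m <= N ->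
  has (fun a => (a < m) && P a) (iota 0 N) = has P (iota 0 m).
Proof.
move=> mN; rewrite -(subnKC mN) iotaD has_cat add0n.
have -> : has (fun a => (a < m) && P a) (iota m (N - m)) = false.
  by apply/hasP => [[a]]; rewrite mem_iota => /andP[ma _] /andP[am _]; lia.
rewrite orbF; apply: eq_in_has => a; rewrite mem_iota add0n => /andP[_ ->] //.
Qed.

Lemma all_iota_prefix (P : pred nat) m N : m <= N ->
  all (fun a => (m <= a) || P a) (iota 0 N) = all P (iota 0 m).
Proof.
move=> mN; rewrite -(subnKC mN) iotaD all_cat add0n.
have -> : all (fun a => (m <= a) || P a) (iota m (N - m)) = true.
  by apply/allP => a; rewrite mem_iota => /andP[-> _].
rewrite andbT; apply: eq_in_all => a; rewrite mem_iota add0n => /andP[_ am].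
by rewrite leqNgt am.
Qed.

Fixpoint horner_nat (m a : nat) (u : seq nat) : nat :=
  if u is x :: u' then horner_nat m (a * m + x) u' else a.

Lemma horner_natE m a u : horner_nat m a u = a * m ^ size u + horner_nat m 0 u.
Proof.
elim: u a => [|x u IH] a /=; first by rewrite muln1 addn0.
by rewrite (IH (a * m + x)) (IH (0 * m + x)) expnS mul0n add0n !mulnDl addnA mulnA [a * m]mulnC.
Qed.

Lemma horner_nat_ge m a u : 0 < m -> a <= horner_nat m a u.
Proof.
by move=> m0; rewrite horner_natE (leq_trans _ (leq_addr _ _)) // leq_pmulr // expn_gt0 m0.
Qed.

Lemma horner_nat_lt m u : all (fun x => x < m) u -> horner_nat m 0 u < m ^ size u.
Proof.
elim: u => [|x u IH] //= /andP[xm /IH um].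
rewrite horner_natE add0n expnS.
have : x.+1 * m ^ size u <= m * m ^ size u by rewrite leq_mul2r xm orbT.
rewrite mulSn; lia.
Qed.

Lemma horner_nat_nseq a c k : (horner_nat a.+1 c (nseq k a)).+1 = c.+1 * a.+1 ^ k.
Proof.
elim: k c => [|k IH] c /=; first by rewrite muln1.
by rewrite IH expnS mulnA; congr (_ * _); rewrite mulnS; lia.
Qed.

Lemma size_flatten_cons (T : seq (seq nat)) r :
  size (flatten [seq [seq i :: u | u <- T] | i <- r]) = size r * size T.
Proof. by elim: r => //= i r IH; rewrite size_cat size_map IH. Qed.

Lemma index_flatten_cons (T : seq (seq nat)) a c x u : a <= x < a + c -> u \in T ->
  index (x :: u) (flatten [seq [seq i :: u | u <- T] | i <- iota a c])
  = (x - a) * size T + index u T.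
Proof.
elim: c a => [|c IH] a; first by move=> h; lia.
move=> /andP[ax xac] uT /=; rewrite index_cat.
have [->|xa] := eqVneq x a; first by rewrite mem_map ?uT ?index_map ?subnn //; move=> ? ? [].
have -> : (x :: u \in [seq a :: u0 | u0 <- T]) = false.
  by apply/mapP => [[u0 _ [E _]]]; move: xa; rewrite E eqxx.
rewrite size_map IH; last by lia.
  have -> : x - a = (x - a.+1).+1 by lia.
  by rewrite mulSn addnA.
by apply/andP; split; lia.
Qed.

Lemma size_tuples_lex n k : size (tuples_lex n k) = n ^ k.
Proof. by elim: k => //= k IH; rewrite size_flatten_cons size_iota IH expnS. Qed.

Lemma index_tuples_lex n u : all (fun x => x < n) u ->
  index u (tuples_lex n (size u)) = horner_nat n 0 u.
Proof.
elim: u => [|x u IH] //= /andP[xn un].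
have uT : u \in tuples_lex n (size u).
  by rewrite -index_mem IH // size_tuples_lex horner_nat_lt.
by rewrite index_flatten_cons ?xn // IH // size_tuples_lex subn0 (horner_natE _ (_ + x)).
Qed.

Lemma mem_tuples_lex n u : all (fun x => x < n) u -> u \in tuples_lex n (size u).
Proof. by move=> un; rewrite -index_mem index_tuples_lex // size_tuples_lex horner_nat_lt. Qed.

Lemma index_iota0 i n : i < n -> index i (iota 0 n) = i.
Proof.
by move=> lt_in; rewrite -{1}[i]add0n -(nth_iota 0 0 lt_in) index_uniq ?size_iota ?iota_uniq.
Qed.

Lemma upd_same env x a : upd env x a x = a.
Proof. by rewrite /upd eqxx. Qed.

Lemma upd_other env x a y : y != x -> upd env x a y = env y.
Proof. by rewrite /upd => /negbTE ->. Qed.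

(* Variable 0 holds the last position x0 of the unpadded word, and x0 + 1 is the base of
   the positional code of tuples; a variable x of the source formula becomes x.*2.+1, and
   the even variables scratch_var d j (j = 1, 2, 3) hold the intermediate results of the
   d-th Horner step acc * x0 + acc + u. *)
Definition scratch_var d j := (3 * d + j).*2.

Definition fresh_at d (u : term) := all (fun y => odd y || (y < scratch_var d 1)) (tvars u).

Lemma scratch_var_eq d i j : (scratch_var d i == scratch_var d j) = (i == j).
Proof. by rewrite /scratch_var -!muln2; apply/eqP/eqP; lia. Qed.

Lemma scratch_var_neq0 d j : 0 < j -> 0 != scratch_var d j.
Proof. by rewrite /scratch_var -!muln2 => j0; apply/eqP; lia. Qed.

Lemma fresh_atS d u : fresh_at d u -> fresh_at d.+1 u.
Proof.
case: u => //= y; rewrite /fresh_at /scratch_var /= !andbT -!muln2.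
by case/orP => [->|?] //; apply/orP; right; lia.
Qed.

Lemma fresh_at_scratch d : fresh_at d.+1 (TVar (scratch_var d 3)).
Proof. by rewrite /fresh_at /scratch_var /= -!muln2 andbT; apply/orP; right; lia. Qed.

Lemma eval_upd_scratch d j u n env c : 0 < j -> fresh_at d u ->
  eval_term n (upd env (scratch_var d j) c) u = eval_term n env u.
Proof.
case: u => //= y j0; rewrite /fresh_at /= andbT => Hy; rewrite /upd.
case: eqP Hy => // ->; rewrite /scratch_var odd_double /= -!muln2; lia.
Qed.

Fixpoint fo2_horner (G : Type) (s : nat) (fin : term -> fo2 G s) (us : seq term)
  (acc : term) (d : nat) : fo2 G s :=
  let c j := TVar (scratch_var d j) in
  if us is u :: us' then
    F2Ex (scratch_var d 1) (F2And (F2Times acc (TVar 0) (c 1))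
     (F2Ex (scratch_var d 2) (F2And (F2Plus (c 1) acc (c 2))
      (F2Ex (scratch_var d 3) (F2And (F2Plus (c 2) u (c 3))
        (fo2_horner fin us' (c 3) d.+1))))))
  else fin acc.

Lemma sat2_horner (G : eqType) s (L : pred (seq 'I_s.+1)) (v : seq G) senv
    (fin : term -> fo2 G s) (P : pred nat) :
    (forall env e, sat2 L v senv env (fin e) = P (eval_term (size v) env e)) ->
  forall us d acc env, fresh_at d acc -> all (fresh_at d) us ->
  eval_term (size v) env acc < size v ->
  let r := horner_nat (env 0).+1 (eval_term (size v) env acc)
             (map (eval_term (size v) env) us) in
  sat2 L v senv env (fo2_horner fin us acc d) = (r < size v) && P r.
Proof.
move=> sat_fin; elim=> [|u us IH] d acc env fresh_acc /=; first by rewrite sat_fin => _ ->.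
case/andP=> fresh_u fresh_us acc_lt.
set N := size v; set a := eval_term N env acc; set x := eval_term N env u.
set env3 := fun c1 c2 c3 =>
  upd (upd (upd env (scratch_var d 1) c1) (scratch_var d 2) c2) (scratch_var d 3) c3.
set c3 := a * env 0 + a + x.
have env3_0 c1 c2 : env3 c1 c2 c3 0 = env 0 by rewrite /env3 !upd_other ?scratch_var_neq0.
have env3_us c1 c2 : map (eval_term N (env3 c1 c2 c3)) us = map (eval_term N env) us.
  by elim: (us) fresh_us => //= y ys IHys /andP[fy /IHys ->]; rewrite /env3 !eval_upd_scratch.
rewrite (@eq_in_has _ _ (fun c1 => (a * env 0 == c1) && has (fun c2 => (c1 + a == c2) &&
   has (fun c => (c2 + x == c) && sat2 L v senv (env3 c1 c2 c)
      (fo2_horner fin us (TVar (scratch_var d 3)) d.+1)) (iota 0 N)) (iota 0 N))); last first.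
  move=> c1 _ /=; rewrite eval_upd_scratch // upd_other ?scratch_var_neq0 // upd_same.
  congr andb; apply: eq_in_has => c2 _ /=.
  rewrite !eval_upd_scratch // upd_other ?scratch_var_eq // !upd_same.
  congr andb; apply: eq_in_has => c _ /=.
  by rewrite !eval_upd_scratch // upd_other ?scratch_var_eq // !upd_same.
rewrite has_eq_andl; under eq_has do rewrite has_eq_andl; rewrite has_eq_andl !mem_iota add0n.
have -> : a * (env 0).+1 + x = c3 by rewrite /c3 mulnS; lia.
set r := horner_nat _ c3 _.
(* The intermediate values are bounded by the final one, so only its bound matters. *)
have c3_le : c3 <= r by apply: horner_nat_ge.
have [c3_lt|c3_ge] := ltnP c3 N; last by rewrite !andbF; case: ltnP => // ?; lia.
have env3_3 c1 c2 : env3 c1 c2 c3 (scratch_var d 3) = c3 by rewrite /env3 upd_same.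
rewrite IH /= ?env3_0 ?env3_3 ?env3_us //; last first.
- exact: (sub_all (@fresh_atS d)) fresh_us.
- exact: fresh_at_scratch.
have lt1 : a * env 0 < N by rewrite /c3 in c3_lt; lia.
have lt2 : a * env 0 + a < N by rewrite /c3 in c3_lt; lia.
by rewrite lt1 lt2.
Qed.

Definition pad (S : Type) k (w : seq S) : seq (option S) :=
  map Some w ++ nseq (size w ^ k - size w) None.

Lemma leq_self_expn m k : 0 < k -> m <= m ^ k.
Proof. by case: m => // m k0; rewrite -{1}(expn1 m.+1) leq_pexp2l. Qed.

Lemma size_pad (S : Type) k (w : seq S) : 0 < k -> size (pad k w) = size w ^ k.
Proof. by move=> /(leq_self_expn (size w)) wk; rewrite size_cat size_map size_nseq subnKC. Qed.

Lemma letter_at_Some (S : eqType) (w : seq S) r p a : p < size w ->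
  letter_at (map Some w ++ r) p (Some a) = letter_at w p a.
Proof. by rewrite /letter_at; elim: w p => [|x w IH] [|p] //= /IH. Qed.
Lemma nth_pad_None (S : eqType) k (w : seq S) y : y < size (pad k w) ->
  (nth None (pad k w) y == None) = (size w <= y).
Proof.
rewrite /pad nth_cat size_map => _; case: ltnP => y_w; last by rewrite nth_nseq if_same.
by elim: w y y_w => [|x w IH] [|y] //=; apply: IH.
Qed.

Lemma padded_prefix (T : eqType) (v : seq (option T)) m : m <= size v ->
  (forall y, y < size v -> (nth None v y == None) = (m <= y)) ->
  exists2 w, size w = m & v = map Some w ++ nseq (size v - m) None.
Proof.
move=> m_le none_iff.
have take_Some : map Some (pmap id (take m v)) = take m v.
  rewrite pmapS_filter map_id; apply/all_filterP/(all_nthP None) => i.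
  rewrite size_takel // => i_lt; rewrite nth_take //.
  by have := none_iff i (leq_trans i_lt m_le); case: (nth None v i); rewrite // leqNgt i_lt.
have drop_None : drop m v = nseq (size v - m) None.
  rewrite -size_drop; apply/all_pred1P/(all_nthP None) => i; rewrite size_drop => i_lt.
  by rewrite nth_drop /= none_iff ?leq_addr // -ltn_subRL.
exists (pmap id (take m v)); first by rewrite -(size_map Some) take_Some size_takel.
by rewrite take_Some -drop_None cat_take_drop.
Qed.


Definition embed_term (u : term) : term :=
  match u with TVar y => TVar y.*2.+1 | TMin => TMin | TMax => TVar 0 end.

Fixpoint embed_fo1 (S : Type) (s t k : nat) (f : fo1 S t k) : fo2 (option S) s :=
  match f with
  | F1Eq u v => F2Eq (embed_term u) (embed_term v)
  | F1Lt u v => F2Lt (embed_term u) (embed_term v)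
  | F1P a u => F2P (Some a) (embed_term u)
  | F1Rel i us => fo2_horner (F2In i) (map embed_term us) TMin 0
  | F1Not g => F2Not (embed_fo1 s g)
  | F1And g h => F2And (embed_fo1 s g) (embed_fo1 s h)
  | F1Or g h => F2Or (embed_fo1 s g) (embed_fo1 s h)
  | F1Ex x g => F2Ex x.*2.+1 (F2And (F2Not (F2Lt (TVar 0) (TVar x.*2.+1))) (embed_fo1 s g))
  | F1All x g => F2All x.*2.+1 (F2Or (F2Lt (TVar 0) (TVar x.*2.+1)) (embed_fo1 s g))
  end.

Lemma eval_embed_term n m env1 env2 u :
  (forall y, env2 y.*2.+1 = env1 y) -> env2 0 = m.-1 ->
  eval_term n env2 (embed_term u) = eval_term m env1 u.
Proof. by case: u => //= y ->. Qed.

Lemma eval_term_lt m env u : 0 < m -> (forall y, env y < m) -> eval_term m env u < m.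
Proof. by case: u => [y||] /= m0 // _; rewrite prednK. Qed.

Lemma agree_upd env1 env2 x c y : (forall y, env2 y.*2.+1 = env1 y) ->
  upd env2 x.*2.+1 c y.*2.+1 = upd env1 x c y.
Proof. by rewrite /upd eqSS (inj_eq double_inj) => ->. Qed.

Lemma lt_upd m env x c y : (forall y, env y < m) -> c < m -> upd env x c y < m.
Proof. by rewrite /upd; case: eqP. Qed.

Section Embedding.

Variables (S : eqType) (s t k : nat) (L : pred (seq 'I_s.+1)) (w : seq S) (b : seq bool).
Hypotheses (w_gt0 : 0 < size w) (k_gt0 : 0 < k).

Let m := size w.
Let v := pad k w.
Let senv := supd (fun _ _ => false) (iota 0 t) (size v) b.

Lemma sat2_embed_rel (i : 'I_t) (us : k.-tuple term) env1 env2 :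
  (forall y, env1 y < m) -> (forall y, env2 y.*2.+1 = env1 y) -> env2 0 = m.-1 ->
  sat2 L v senv env2 (embed_fo1 s (F1Rel S i us)) = @rel_of t m k b i (map (eval_term m env1) us).
Proof.
move=> env1_lt env_agree env2_0 /=.
have size_v : size v = m ^ k by apply: size_pad.
rewrite (@sat2_horner _ s L v senv _ (senv i)) //; first last.
- by rewrite size_v expn_gt0 w_gt0.
- by elim: (tval us) => //= u us' ->; case: u => //= y; rewrite /fresh_at /= odd_double.
rewrite env2_0 prednK // -map_comp.
rewrite (eq_map (fun u => eval_embed_term (size v) u env_agree env2_0)).
set vals := map _ us.
have vals_lt : all (fun y => y < m) vals.
  by rewrite all_map; apply: sub_all (all_predT _) => u _; apply: eval_term_lt.
have size_vals : size vals = k by rewrite size_map size_tuple.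
rewrite /= size_v /rel_of -size_vals mem_tuples_lex // index_tuples_lex //.
by rewrite (horner_nat_lt vals_lt) /senv /supd mem_iota ltn_ord index_iota0 // size_v size_vals.
Qed.

Lemma sat2_embed_fo1 (f : fo1 S t k) env1 env2 :
  (forall y, env1 y < m) -> (forall y, env2 y.*2.+1 = env1 y) -> env2 0 = m.-1 ->
  sat2 L v senv env2 (embed_fo1 s f) = sat1 w (@rel_of t m k b) env1 f.
Proof.
have m_le_v : m <= size v by rewrite size_pad // leq_self_expn.
elim: f env1 env2 => [u1 u2|u1 u2|a u|i us|g IH|g IHg h IHh|g IHg h IHh|x g IH|x g IH]
  env1 env2 env1_lt agree env2_0 /=;
  rewrite ?(eval_embed_term _ _ agree env2_0) ?(IH env1) ?(IHg env1) ?(IHh env1) //.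
- by rewrite letter_at_Some ?eval_term_lt.
- exact: sat2_embed_rel.
- rewrite -(has_iota_prefix _ m_le_v); apply: eq_in_has => c _ /=.
  rewrite upd_same upd_other // env2_0 -leqNgt -ltnS prednK //.
  case: ltnP => //= c_lt; rewrite (IH (upd env1 x c)) // => y.
  + exact: lt_upd.
  + exact: agree_upd.
- rewrite -(all_iota_prefix _ m_le_v); apply: eq_in_all => c _ /=.
  rewrite upd_same upd_other // env2_0 prednK //.
  case: ltnP => //= c_lt; rewrite (IH (upd env1 x c)) // => y.
  + exact: lt_upd.
  + exact: agree_upd.
Qed.

End Embedding.

Lemma sat2_embed_Q (S : eqType) s t k (L : pred (seq 'I_s.+1)) (psi : 'I_s -> fo1 S t k)
    (w : seq S) : 0 < size w -> 0 < k ->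
  sat2 L (pad k w) (fun _ _ => false) (upd (fun _ => 0) 0 (size w).-1)
    (F2Q (iota 0 t) (fun j => embed_fo1 s (psi j))) = qsat1 L psi w.
Proof.
move=> w_gt0 k_gt0; rewrite /= /qsat1 size_iota size_pad //.
congr (L _); apply: eq_map => b; rewrite /pick_letter; congr (head _ (map _ _)).
apply: eq_filter => j.
by rewrite -(size_pad w k_gt0) (sat2_embed_fo1 L b w_gt0 k_gt0 _ (env1 := fun=> 0)) // upd_other.
Qed.

Definition padding_shape (S : Type) s : fo2 (option S) s :=
  F2All 1 (F2And (F2Or (F2Lt (TVar 0) (TVar 1)) (F2Not (F2P None (TVar 1))))
                 (F2Or (F2Not (F2Lt (TVar 0) (TVar 1))) (F2P None (TVar 1)))).

Lemma sat2_padding_shape (S : eqType) s (L : pred (seq 'I_s.+1)) (v : seq (option S))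
    senv env a :
  sat2 L v senv (upd env 0 a) (padding_shape S s) =
  all (fun y => (nth None v y == None) == (a < y)) (iota 0 (size v)).
Proof.
rewrite /padding_shape /=; apply: eq_in_all => y; rewrite mem_iota => /andP[_ y_lt] /=.
rewrite upd_same upd_other // /letter_at (nth_map None) //.
by case: (a < y); case: (nth None v y).
Qed.

Definition padded_length (G : Type) s k : fo2 G s :=
  fo2_horner (fun e => F2Eq e TMax) (nseq k (TVar 0)) TMin 0.

Lemma sat2_padded_length (G : eqType) s (L : pred (seq 'I_s.+1)) (v : seq G) senv env a k :
  0 < size v -> sat2 L v senv (upd env 0 a) (padded_length G s k) = (a.+1 ^ k == size v).
Proof.
move=> v_gt0; rewrite /padded_length (@sat2_horner _ s L v senv _ (pred1 (size v).-1)) //;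
  last by elim: k.
rewrite /= map_nseq /= upd_same.
have := horner_nat_nseq a 0 k; rewrite mul1n => <-.
by case: ltnP => r_lt /=; [apply/eqP/eqP | apply/esym/eqP]; lia.
Qed.


Definition padded_sentence (S : Type) s t k (psi : 'I_s -> fo1 S t k) : fo2 (option S) s :=
  F2Ex 0 (F2And (F2And (padding_shape S s) (padded_length (option S) s k))
                (F2Q (iota 0 t) (fun j => embed_fo1 s (psi j)))).

Lemma sat2_padded_sentence (S : eqType) s t k (L : pred (seq 'I_s.+1))
    (psi : 'I_s -> fo1 S t k) (v : seq (option S)) : 0 < k -> v != [::] ->
  sat2 L v (fun _ _ => false) (fun _ => 0) (padded_sentence psi) <->
  exists w, [/\ w != [::], qsat1 L psi w & v = pad k w].
Proof.
move=> k_gt0; rewrite -size_eq0 -lt0n => v_gt0.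
set Q := F2Q (iota 0 t) (fun j => embed_fo1 s (psi j)).
have -> : sat2 L v (fun _ _ => false) (fun _ => 0) (padded_sentence psi) =
    has (fun a => [&& sat2 L v (fun _ _ => false) (upd (fun _ => 0) 0 a) (padding_shape S s),
                      sat2 L v (fun _ _ => false) (upd (fun _ => 0) 0 a) (padded_length _ s k)
                    & sat2 L v (fun _ _ => false) (upd (fun _ => 0) 0 a) Q]) (iota 0 (size v)).
  by apply: eq_has => a; rewrite andbA.
under eq_has do rewrite sat2_padding_shape sat2_padded_length //.
split.
- case/hasP => a; rewrite mem_iota => /andP[_ a_lt] /and3P[shape /eqP size_v sat_Q].
  have [w size_w def_v] : exists2 w, size w = a.+1 & v = map Some w ++ nseq (size v - a.+1) None.
    apply: padded_prefix => // y y_lt.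
    by have := allP shape y; rewrite mem_iota y_lt => /(_ isT) /eqP.
  have def_v' : v = pad k w by rewrite /pad size_w size_v.
  exists w; split; first by rewrite -size_eq0 size_w.
  - by rewrite -sat2_embed_Q ?size_w // -def_v'.
  - exact: def_v'.
case=> w [w_nil sat_w ->]; have w_gt0 : 0 < size w by rewrite lt0n size_eq0.
apply/hasP; exists (size w).-1.
  by rewrite mem_iota size_pad // (leq_trans _ (leq_self_expn _ k_gt0)) // prednK.
rewrite prednK // size_pad // eqxx sat2_embed_Q // sat_w -(size_pad w k_gt0) !andbT.
by apply/allP => y; rewrite mem_iota => /andP[_ /nth_pad_None ->].
Qed.

Lemma wf2_horner (G : Type) s (fin : term -> fo2 G s) us acc d :
  (forall e, wf2 (fin e)) -> wf2 (fo2_horner fin us acc d).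
Proof. by move=> wf_fin; elim: us acc d => //= u us IH acc d; rewrite IH. Qed.

Lemma wf2_embed_fo1 (S : Type) s t k (f : fo1 S t k) : wf2 (embed_fo1 s f).
Proof. by elim: f => //= *; rewrite ?wf2_horner // => *; apply/andP. Qed.

Lemma fsv2_horner (G : Type) s (fin : term -> fo2 G s) (P : pred nat) us acc d :
  (forall e, all P (fsv2 (fin e))) -> all P (fsv2 (fo2_horner fin us acc d)).
Proof. by move=> fsv_fin; elim: us acc d => //= u us IH acc d. Qed.

Lemma fsv2_embed_fo1 (S : Type) s t k (f : fo1 S t k) :
  all (fun X => X < t) (fsv2 (embed_fo1 s f)).
Proof.
elim: f => //= *; rewrite ?all_cat; try exact/andP.
by apply: fsv2_horner => e /=; rewrite ltn_ord.
Qed.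

Lemma fv2_horner (G : Type) s (fin : term -> fo2 G s) :
    (forall e, {subset fv2 (fin e) <= tvars e}) ->
  forall us acc d,
  {subset fv2 (fo2_horner fin us acc d) <= 0 :: tvars acc ++ flatten (map tvars us)}.
Proof.
move=> fv_fin; elim=> [|u us IH] acc d y /=; first by rewrite cats0 inE => /fv_fin ->; rewrite orbT.
have := IH (TVar (scratch_var d 3)) d.+1 y.
rewrite /= !scratch_var_eq /= !(inE, mem_filter, mem_cat).
case: (y \in fv2 _) => [/(_ isT)|_]; case: (y == 0); case: (y \in tvars acc);
  case: (y \in tvars u); case: (y \in flatten _); case: (y == scratch_var d 1);
  case: (y == scratch_var d 2); by case: (y == scratch_var d 3).
Qed.

Lemma subset_cons_cat (T : eqType) (x : T) (s1 s2 t1 t2 : seq T) :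
  {subset s1 <= x :: t1} -> {subset s2 <= x :: t2} -> {subset s1 ++ s2 <= x :: t1 ++ t2}.
Proof.
move=> sub1 sub2 y; rewrite mem_cat => /orP[/sub1|/sub2];
  by rewrite !inE mem_cat => /orP[->|->]; rewrite ?orbT.
Qed.

Lemma fv2_embed_term u : {subset tvars (embed_term u) <= 0 :: map (fun x => x.*2.+1) (tvars u)}.
Proof. by case: u => [x||] y //=; rewrite !inE => ->; rewrite orbT. Qed.

Lemma fv2_embed_fo1 (S : Type) s t k (f : fo1 S t k) :
  {subset fv2 (embed_fo1 s f) <= 0 :: map (fun x => x.*2.+1) (fv1 f)}.
Proof.
elim: f => [u1 u2|u1 u2|a u|i us|g IH|g IHg h IHh|g IHg h IHh|x g IH|x g IH] /=;
  rewrite ?map_cat; try by apply: subset_cons_cat; apply: fv2_embed_term.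
- exact: fv2_embed_term.
- move=> y /(@fv2_horner _ s (F2In i) (fun _ _ => id)).
  rewrite inE => /orP[/eqP->|]; rewrite ?mem_head //=.
  move: y; elim: (tval us) => //= u us' IHus; rewrite map_cat.
  exact: subset_cons_cat (@fv2_embed_term u) IHus.
- exact: IH.
- exact: subset_cons_cat.
- exact: subset_cons_cat.
all: rewrite eqxx => y; rewrite !inE mem_filter => /orP[->//|/andP[y_x /IH]].
all: rewrite inE => /orP[->//|/mapP[z z_g def_y]]; subst y; apply/orP; right.
all: by rewrite map_f // mem_filter z_g andbT; apply: contraNneq y_x => ->.
Qed.

Lemma wf2_padded_sentence (S : Type) s t k (psi : 'I_s -> fo1 S t k) :
  0 < t -> wf2 (padded_sentence psi).
Proof.
move=> t_gt0; rewrite /= wf2_horner // size_iota t_gt0 iota_uniq /=.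
by apply/allP => j _; apply: wf2_embed_fo1.
Qed.

Lemma fsv2_padded_sentence (S : Type) s t k (psi : 'I_s -> fo1 S t k) :
  fsv2 (padded_sentence psi) = [::].
Proof.
have fsv_length : fsv2 (padded_length (option S) s k) = [::].
  have := @fsv2_horner (option S) s (fun e => F2Eq e TMax) pred0 (nseq k (TVar 0)) TMin 0
    (fun _ : term => isT).
  by rewrite /padded_length; case: (fsv2 _).
rewrite /= fsv_length /=.
rewrite (@eq_in_filter _ _ pred0) ?filter_pred0 // => X /flattenP[_ /mapP[j _ ->]].
by move/(allP (fsv2_embed_fo1 s (psi j))); rewrite mem_iota => ->.
Qed.

Lemma fv2_padded_sentence (S : Type) s t k (psi : 'I_s -> fo1 S t k) :
  (forall j, fv1 (psi j) = [::]) -> fv2 (padded_sentence psi) = [::].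
Proof.
move=> psi_closed; rewrite /= (@eq_in_filter _ _ pred0) ?filter_pred0 // => y y_in.
apply/negbTE/negPn; move: y_in; rewrite mem_cat => /orP[|].
- have fv_fin e : {subset fv2 (@F2Eq (option S) s e TMax) <= tvars e} by move=> z; rewrite /= cats0.
  move/(fv2_horner fv_fin).
  rewrite inE map_nseq => /orP[//|/flattenP[l]].
  by rewrite mem_nseq => /andP[_ /eqP ->]; rewrite inE.
- case/flattenP => _ /mapP[j _ ->] /fv2_embed_fo1.
  by rewrite psi_closed inE.
Qed.

Theorem proposition5p1 (S : finType) (s t k : nat) (L : pred (seq 'I_s.+1))
  (A : pred (seq S)) (psi : 'I_s -> fo1 S t k) :
  0 < t -> 0 < k ->
  (forall j, fv1 (psi j) = [::]) ->
  (forall w : seq S, w != [::] -> A w = qsat1 L psi w) ->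
  exists chi : fo2 (option S) s,
    [/\ wf2 chi, fv2 chi = [::], fsv2 chi = [::] &
      forall v : seq (option S), v != [::] ->
        (A_star A k v <-> sat2 L v (fun _ _ => false) (fun _ => 0) chi)].
Proof.
move=> t_gt0 k_gt0 psi_closed A_def; exists (padded_sentence psi).
split; [exact: wf2_padded_sentence | exact: fv2_padded_sentence | exact: fsv2_padded_sentence |].
move=> v v_nil; rewrite sat2_padded_sentence //; split.
- case=> w [Aw def_v]; have w_nil : w != [::].
    by apply: contraNneq v_nil => w0; rewrite def_v w0 /= exp0n.
  by exists w; rewrite -A_def.
- by case=> w [w_nil sat_w def_v]; exists w; rewrite A_def.
Qed.
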